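(* Let $(B,\lfloor\cdot,\cdot\rfloor)$ be an SSD space with quadratic form $q$ and let $A\subset B$ be $q$-representable. If $\Phi_A(b)\ge q(b)$ for all $b\in\operatorname{conv}^w A$, then $A=G_{\Phi_A}$.
   Context: An SSD space is a pair $(B,\lfloor\cdot,\cdot\rfloor)$ with $B$ a nonzero real vector space and $\lfloor\cdot,\cdot\rfloor$ a symmetric bilinear form; $q(b)=\frac12\lfloor b,b\rfloor$. $w(B,B)$ is the coarsest topology on $B$ making all maps $b\mapsto\lfloor b,c\rfloor$ continuous; $\operatorname{conv}^w A$ is the $w(B,B)$-closure of the convex hull of $A$. A nonempty $A\subset B$ is $q$-positive if $q(b-c)\ge0$ for all $b,c\in A$. $\Phi_A(x)=\sup_{a\in A}\{\lfloor x,a\rfloor-q(a)\}$. For proper convex $f$, $f^{@}(b)=\sup_{c\in B}\{\lfloor c,b\rfloor-f(c)\}$, $\mathcal{P}_q(f)=\{b: f(b)=q(b)\}$, $G_f=\{b: f(b)+f^{@}(b)=\lfloor b,b\rfloor\}$. A $q$-positive set $A$ is $q$-representable if there is a $w(B,B)$-lsc proper convex $f:B\to\mathbb{R}\cup\{+\infty\}$ with $f\ge q$ on $B$ and $\mathcal{P}_q(f)=A$. *)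

From HB Require Import structures.
From mathcomp Require Import all_boot all_order all_algebra.
From mathcomp Require Import all_classical all_reals ereal.
Set Implicit Arguments. Unset Strict Implicit. Unset Printing Implicit Defensive.
Import Order.TTheory GRing.Theory Num.Theory.
Local Open Scope classical_set_scope.
Local Open Scope ring_scope.

Section SSD.
Variables (R : realType) (B : lmodType R) (bf : B -> B -> R).

Definition SSD_space : Prop :=
  (exists b : B, b != 0) /\
  (forall b c, bf b c = bf c b) /\
  (forall (a : R) (x y z : B), bf (a *: x + y) z = a * bf x z + bf y z).

Definition qf (b : B) : R := bf b b / 2.

(* basic w(B,B)-neighbourhood of x determined by finitely many c's and eps *)
Definition wball (x : B) (cs : seq B) (eps : R) : set B :=
  [set y | forall c, c \in cs -> `|bf (y - x) c| < eps].

Definition wclosure (S : set B) : set B :=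
  [set x | forall (cs : seq B) (eps : R), 0 < eps ->
           exists2 y, S y & wball x cs eps y].

Definition wlsc (f : B -> \bar R) : Prop :=
  forall (x : B) (t : R), (t%:E < f x)%E ->
    exists cs : seq B, exists2 eps : R, 0 < eps &
      forall y, wball x cs eps y -> (t%:E < f y)%E.

Definition proper_fun (f : B -> \bar R) : Prop :=
  (forall x, f x != -oo%E) /\ (exists x, f x != +oo%E).

Definition convex_fun (f : B -> \bar R) : Prop :=
  forall (x y : B) (l : R), 0 < l -> l < 1 ->
    (f (l *: x + (1 - l) *: y)%R <= l%:E * f x + (1 - l)%:E * f y)%E.

Definition conv (A : set B) : set B :=
  [set x | exists s : seq (R * B),
     [/\ (forall p, p \in s -> 0 <= p.1 /\ A p.2),
         \sum_(p <- s) p.1 = 1 &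
         x = \sum_(p <- s) p.1 *: p.2]].

Definition convw (A : set B) : set B := wclosure (conv A).

Definition q_positive (A : set B) : Prop :=
  A !=set0 /\ (forall b c, A b -> A c -> 0 <= qf (b - c)).

Definition PhiA (A : set B) (x : B) : \bar R :=
  ereal_sup [set ((bf x a - qf a)%:E) | a in A].

Definition fat (f : B -> \bar R) (b : B) : \bar R :=
  ereal_sup [set ((bf c b)%:E - f c)%E | c in [set: B]].

Definition Pq (f : B -> \bar R) : set B := [set b | f b = (qf b)%:E].

Definition Gf (f : B -> \bar R) : set B :=
  [set b | (f b + fat f b)%E = (bf b b)%:E].

Definition q_representable (A : set B) : Prop :=
  q_positive A /\
  exists f : B -> \bar R,
    [/\ wlsc f, proper_fun f, convex_fun f,
        (forall b, ((qf b)%:E <= f b)%E) & Pq f = A].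

End SSD.

From HB Require Import structures.
From mathcomp Require Import all_boot all_order all_algebra.
From mathcomp Require Import all_classical all_reals ereal.
From mathcomp Require Import lra ring.
Set Implicit Arguments. Unset Strict Implicit. Unset Printing Implicit Defensive.
Import Order.TTheory GRing.Theory Num.Theory.
Local Open Scope classical_set_scope.
Local Open Scope ring_scope.

(* For a in A, q-positivity gives Phi_A(a) = q(a) = Phi_A^@(a), so A is contained in
   G_{Phi_A}.  Conversely let b be in G_{Phi_A}; then Phi_A^@(b) is finite.  If b were not
   in conv^w A, a w(B,B)-continuous functional d would strictly separate b from conv A,
   and moving from a point of A along d would make Phi_A^@(b) infinite.  Hence
   q(b) <= Phi_A(b), i.e. Phi_A^@(b) <= q(b).  On the other hand a representing function
   f is the supremum of its w(B,B)-continuous affine minorants, and each of them lies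
   below Phi_A^@ because f = q on A; so q(b) <= f(b) <= Phi_A^@(b) <= q(b) and
   b is in P_q(f) = A.  The affine minorants come from a Hahn-Banach separation which,
   since basic w(B,B)-neighbourhoods are cut out by finitely many functionals, reduces to
   separation of convex sets in R^n, which goes by induction on n. *)

Lemma exists_pmulr_gt (R : realFieldType) (a b : R) :
  0 < a -> exists2 k, 0 <= k & b < a * k.
Proof.
move=> a0; exists ((`|b| + 1) / a); first by rewrite divr_ge0 ?ltW ?ltr_pwDr.
by rewrite mulrC divfK ?gt_eqF //; have := ler_norm b; lra.
Qed.

Lemma le_of_adde_eq (R : realDomainType) (x y : \bar R) (u v : R) :
  (x + y = (u + v)%:E -> u%:E <= x -> y <= v%:E)%E.
Proof.
case: x => [r| |]; case: y => [s| |] //=; rewrite ?leNye //.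
by move=> [E]; rewrite !lee_fin; lra.
Qed.

Section ConeSeparation.
Variable R : realType.
Implicit Types (D K : (nat -> R) -> Prop) (l p v x : nat -> R).

(* A vector of R^m is a function nat -> R of which only the coordinates below m matter. *)
Definition dotn m l x : R := \sum_(i < m) l i * x i.

Definition convex_cone D :=
  [/\ exists x, D x,
      forall x y, D x -> D y -> D (fun i => x i + y i) &
      forall r x, 0 <= r -> D x -> D (fun i => r * x i)].

Definition covers m D :=
  forall v, exists2 x, D x & forall i, (i < m)%N -> x i = v i.

Definition hyperplane_slice m D x := D x /\ x m = 0.

Definition extend m l (a : R) i := if (i < m)%N then l i else a.

Lemma dotn_extend m l a x : dotn m.+1 (extend m l a) x = dotn m l x + a * x m.
Proof.
rewrite /dotn big_ord_recr /= /extend ltnn; congr (_ + _).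
by apply: eq_bigr => i _; rewrite ltn_ord.
Qed.

Lemma dotn0 m x : dotn m (fun=> 0) x = 0.
Proof. by rewrite /dotn big1 // => i _; rewrite mul0r. Qed.

Lemma convex_cone_slice m D : convex_cone D -> convex_cone (hyperplane_slice m D).
Proof.
case=> [[x0 Dx0] DD DZ]; split.
- by exists (fun i => 0 * x0 i); split; [apply: DZ | rewrite mul0r].
- by move=> x y [Dx xm] [Dy ym]; split; [apply: DD | rewrite xm ym addr0].
- by move=> r x r0 [Dx xm]; split; [apply: DZ | rewrite xm mulr0].
Qed.

Lemma covers_slice m D y w : convex_cone D ->
  D y -> 0 < y m -> D w -> w m < 0 ->
  covers m (hyperplane_slice m D) -> covers m.+1 D.
Proof.
case=> _ DD DZ Dy ym Dw wm cov v.
have [z [Dz zm0 r0]] : exists z, [/\ D z, z m != 0 & 0 <= v m / z m].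
  have [vm0|vm0] := leP 0 (v m).
    by exists y; rewrite gt_eqF // divr_ge0 // ltW.
  by exists w; rewrite lt_eqF // -mulrNN -invrN divr_ge0 // oppr_ge0 ltW.
set r := v m / z m.
have [u [Du um] uv] := cov (fun i => v i - r * z i).
exists (fun i => r * z i + u i); first exact: DD (DZ _ _ r0 Dz) Du.
move=> i; rewrite ltnS leq_eqVlt => /orP[/eqP ->|im].
  by rewrite um addr0 /r divfK.
by rewrite uv // addrC subrK.
Qed.

Lemma cone_extend_functional m D l y w : convex_cone D ->
  D y -> 0 < y m -> D w -> w m < 0 ->
  (forall x, hyperplane_slice m D x -> dotn m l x <= 0) ->
  exists a, forall x, D x -> dotn m l x + a * x m <= 0.
Proof.
case=> _ DD DZ Dy ym Dw wm Hl.
have ratio_le x z : D x -> D z -> x m < 0 -> 0 < z m ->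
    - dotn m l x / x m <= - dotn m l z / z m.
  move=> Dx Dz xm zm.
  pose u i := z m * x i + - x m * z i.
  have Du : hyperplane_slice m D u.
    split; first by apply: DD; apply: DZ => //; rewrite ?oppr_ge0 ltW.
    by rewrite /u; ring.
  have := Hl u Du.
  have -> : dotn m l u = z m * dotn m l x - x m * dotn m l z.
    by rewrite /dotn !mulr_sumr -sumrB; apply: eq_bigr => i _; rewrite /u; ring.
  by move=> H; rewrite ler_ndivrMr // mulrAC ler_pdivrMr //; nra.
(* a must separate the ratios -l.x / x_m with x_m < 0 from those with x_m > 0 *)
pose S := [set - dotn m l x / x m | x in [set x | D x /\ x m < 0]].
have S_ub : ubound S (- dotn m l y / y m).
  by move=> _ [x [Dx xm] <-]; apply: ratio_le.
have S0 : S !=set0 by exists (- dotn m l w / w m), w.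
exists (sup S) => x Dx.
have [xm|xm|xm] := ltgtP (x m) 0; last by rewrite xm mulr0 addr0; apply: Hl.
- have : - dotn m l x / x m <= sup S.
    by apply: ub_le_sup; [exists (- dotn m l y / y m) | exists x].
  by rewrite ler_ndivrMr //; lra.
- have : sup S <= - dotn m l x / x m.
    by apply: ge_sup => // _ [z [Dz zm] <-]; apply: ratio_le.
  by rewrite ler_pdivlMr //; lra.
Qed.

Lemma cone_separation m D : convex_cone D -> ~ covers m D ->
  exists2 l, (exists2 i, (i < m)%N & l i != 0) & forall x, D x -> dotn m l x <= 0.
Proof.
elim: m D => [|m IH] D cD ncov.
  by case: ncov => v; case: cD => -[x Dx] _ _; exists x.
have [Hneg|/existsNP[y /not_implyP[Dy /negP]]] :=
  pselect (forall x, D x -> x m <= 0).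
  exists (extend m (fun=> 0) 1); first by exists m; rewrite ?/extend ?ltnn.
  by move=> x Dx; rewrite dotn_extend dotn0 add0r mul1r Hneg.
rewrite -ltNge => ym.
have [Hpos|/existsNP[w /not_implyP[Dw /negP]]] :=
  pselect (forall x, D x -> 0 <= x m).
  exists (extend m (fun=> 0) (-1)); first by exists m; rewrite ?/extend ?ltnn ?oppr_eq0.
  by move=> x Dx; rewrite dotn_extend dotn0 add0r mulN1r oppr_le0 Hpos.
rewrite -ltNge => wm.
have [l [i im li] Hl] :=
  IH _ (convex_cone_slice m cD) (fun c => ncov (covers_slice cD Dy ym Dw wm c)).
have [a Ha] := cone_extend_functional cD Dy ym Dw wm Hl.
exists (extend m l a); first by exists i; rewrite ?/extend ?im // ltnW.
by move=> x Dx; rewrite dotn_extend Ha.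
Qed.

Definition convex_pts K := forall k1 k2 (l : R), 0 <= l -> l <= 1 ->
  K k1 -> K k2 -> K (fun i => l * k1 i + (1 - l) * k2 i).

Definition cone_hull K x :=
  exists r c, [/\ 0 <= r, K c & x = fun i => r * c i].

Lemma convex_cone_hull K : (exists k, K k) -> convex_pts K ->
  convex_cone (cone_hull K).
Proof.
move=> [k0 Kk0] cK; split.
- by exists (fun i => 0 * k0 i), 0, k0.
- move=> _ _ [r1 [c1 [r10 K1 ->]]] [r2 [c2 [r20 K2 ->]]].
  have [/eqP s0|s0] := eqVneq (r1 + r2) 0.
    have [-> ->] : r1 = 0 /\ r2 = 0 by split; lra.
    by exists 0, c1; split => //; apply: funext => i; rewrite !mul0r addr0.
  have sp : 0 < r1 + r2 by rewrite lt_neqAle eq_sym s0 addr_ge0.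
  exists (r1 + r2), (fun i => r1 / (r1 + r2) * c1 i + (1 - r1 / (r1 + r2)) * c2 i).
  split; first exact: ltW.
    by apply: cK => //; [exact: divr_ge0 r10 (ltW sp) | rewrite ler_pdivrMr // mul1r lerDl].
  by apply: funext => i; field.
- move=> r _ r0 [r1 [c1 [r10 K1 ->]]]; exists (r * r1), c1.
  by split => //; [exact: mulr_ge0 | apply: funext => i; rewrite mulrA].
Qed.

Lemma covers_cone_hull m K : convex_pts K -> covers m (cone_hull K) ->
  exists2 c, K c & forall i, (i < m)%N -> c i = 0.
Proof.
move=> cK cov.
have [_ [_ [c0 [_ Kc0 _]]] _] := cov (fun=> 0).
have [_ [r [c [r0 Kc ->]]] rc] := cov (fun i => - c0 i).
have r1 : 0 < 1 + r by lra.
exists (fun i => r / (1 + r) * c i + (1 - r / (1 + r)) * c0 i).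
  by apply: cK => //; [rewrite divr_ge0 // ltW | rewrite ler_pdivrMr // mul1r lerDr].
move=> i im; rewrite -[c0 i]opprK -rc //; field; exact: lt0r_neq0.
Qed.

Lemma convex_separation_origin m K : (exists k, K k) -> convex_pts K ->
  (forall c, K c -> exists2 i, (i < m)%N & c i != 0) ->
  exists2 l, (exists2 i, (i < m)%N & l i != 0) & forall c, K c -> dotn m l c <= 0.
Proof.
move=> K0 cK nz.
have [|l l0 Hl] := @cone_separation m _ (convex_cone_hull K0 cK).
  move=> /(covers_cone_hull cK)[c Kc c0].
  by have [i im] := nz c Kc; rewrite c0 ?eqxx.
exists l => // c Kc; apply: Hl; exists 1, c.
by split => //; apply: funext => i; rewrite mul1r.
Qed.

Definition box_thickening K p (e : R) c :=
  exists k z, [/\ K k, forall i, `|z i| <= e & c = fun i => k i - p i + z i].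

Lemma convex_pts_thickening K p e :
  convex_pts K -> convex_pts (box_thickening K p e).
Proof.
move=> cK _ _ l l0 l1 [k1 [z1 [K1 z1e ->]]] [k2 [z2 [K2 z2e ->]]].
exists (fun i => l * k1 i + (1 - l) * k2 i),
  (fun i => l * z1 i + (1 - l) * z2 i); split.
- exact: cK.
- move=> i; apply: le_trans (ler_normD _ _) _.
  have l1' : 0 <= 1 - l by lra.
  rewrite !normrM (ger0_norm l0) (ger0_norm l1').
  by have := z1e i; have := z2e i; nra.
- by apply: funext => i; ring.
Qed.

(* Separating the origin from K - p thickened by a box of radius eps/2 yields the
   margin eps/2 * |l|_1. *)
Lemma convex_separation_box m K p (eps : R) : 0 < eps ->
  (exists k, K k) -> convex_pts K ->
  (forall k, K k -> exists2 i, (i < m)%N & eps <= `|k i - p i|) ->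
  exists l, 0 < \sum_(i < m) `|l i| /\
    forall k, K k -> dotn m l k + eps / 2 * \sum_(i < m) `|l i| <= dotn m l p.
Proof.
move=> e0 [k0 Kk0] cK far; have e20 : 0 < eps / 2 by rewrite divr_gt0.
have [||_ [k [z [Kk ze ->]]]|l [i im li] Hl] :=
  @convex_separation_origin m (box_thickening K p (eps / 2)).
- by exists (fun i => k0 i - p i + 0), k0, (fun=> 0); split => // i; rewrite normr0 ltW.
- exact: convex_pts_thickening.
- have [i im ki] := far k Kk; exists i => //; apply/eqP => kz.
  have : k i - p i = - z i by lra.
  by move: ki => /[swap] ->; rewrite normrN; have := ze i; lra.
exists l; split.
  rewrite (bigD1 (Ordinal im)) //= ltr_pwDl ?normr_gt0 //.
  by apply: sumr_ge0 => j _; exact: normr_ge0.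
move=> k Kk; pose z i := if 0 <= l i then eps / 2 else - (eps / 2).
have: box_thickening K p (eps / 2) (fun i => k i - p i + z i).
  exists k, z; split => // j; rewrite /z.
  by case: ifP => _; rewrite ?normrN ger0_norm // ltW.
move=> /Hl; suff -> : dotn m l (fun i => k i - p i + z i) =
    dotn m l k - dotn m l p + eps / 2 * \sum_(i < m) `|l i| by lra.
rewrite /dotn mulr_sumr -sumrB -big_split; apply: eq_bigr => j _ /=.
rewrite /z; case: ifPn => [lj|]; last rewrite -ltNge => lj.
  by rewrite ger0_norm //; ring.
by rewrite ltr0_norm //; ring.
Qed.

End ConeSeparation.

Section SSD.
Variables (R : realType) (B : lmodType R) (bf : B -> B -> R).
Hypothesis bfC : forall b c, bf b c = bf c b.
Hypothesis bfL : forall (a : R) (x y z : B), bf (a *: x + y) z = a * bf x z + bf y z.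

Lemma bf0l z : bf 0 z = 0.
Proof. by have := bfL 1 0 0 z; rewrite scale1r addr0 mul1r; lra. Qed.

Lemma bf0r z : bf z 0 = 0.
Proof. by rewrite bfC bf0l. Qed.

Lemma bfDl x y z : bf (x + y) z = bf x z + bf y z.
Proof. by have := bfL 1 x y z; rewrite scale1r mul1r. Qed.

Lemma bfZl a x z : bf (a *: x) z = a * bf x z.
Proof. by have := bfL a x 0 z; rewrite !addr0 bf0l addr0. Qed.

Lemma bfBl x y z : bf (x - y) z = bf x z - bf y z.
Proof. by rewrite bfDl -scaleN1r bfZl mulN1r. Qed.

Lemma bfDr z x y : bf z (x + y) = bf z x + bf z y.
Proof. by rewrite !(bfC z) bfDl. Qed.

Lemma bfZr a z x : bf z (a *: x) = a * bf z x.
Proof. by rewrite !(bfC z) bfZl. Qed.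

Lemma qfB a c : qf bf (a - c) = qf bf a - bf a c + qf bf c.
Proof. by rewrite /qf !bfBl !(bfC _ (a - c)) !bfBl (bfC c a); field. Qed.

Definition convex_set (K : set B) := forall y1 y2 (l : R), 0 <= l -> l <= 1 ->
  K y1 -> K y2 -> K (l *: y1 + (1 - l) *: y2).

Definition convex_rel (K : B -> R -> Prop) := forall y1 s1 y2 s2 (l : R),
  0 <= l -> l <= 1 -> K y1 s1 -> K y2 s2 ->
  K (l *: y1 + (1 - l) *: y2) (l * s1 + (1 - l) * s2).

Definition wcoords (cs : seq B) (y : B) (s : R) (i : nat) : R :=
  if (i < size cs)%N then bf y (nth 0 cs i) else s.

Lemma dotn_wcoords cs l y s : dotn (size cs).+1 l (wcoords cs y s) =
  bf y (\sum_(i < size cs) l i *: nth 0 cs i) + l (size cs) * s.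
Proof.
rewrite /dotn big_ord_recr /= /wcoords ltnn (big_morph _ (bfDr y) (bf0r y)).
congr (_ + _); apply: eq_bigr => i _; by rewrite ltn_ord bfZr.
Qed.

(* The sup-norm ball of radius eps around wcoords cs x t is the preimage of
   wball bf x cs eps times ]t - eps, t + eps[. *)
Lemma w_separation (cs : seq B) (eps : R) (K : B -> R -> Prop) (x : B) (t : R) :
  0 < eps -> (exists y s, K y s) -> convex_rel K ->
  (forall y s, K y s -> wball bf x cs eps y -> eps <= `|s - t|) ->
  exists d (mu delta : R), 0 < delta /\
    forall y s, K y s -> bf y d + mu * s + delta <= bf x d + mu * t.
Proof.
move=> e0 [y0 [s0 K0]] cK far; set n := size cs.
pose KI k := exists y s, K y s /\ k = wcoords cs y s.
have [|||l [lpos Hl]] := @convex_separation_box R n.+1 KI (wcoords cs x t) eps e0.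
- by exists (wcoords cs y0 s0), y0, s0.
- move=> _ _ l l0 l1 [y1 [s1 [K1 ->]]] [y2 [s2 [K2 ->]]].
  exists (l *: y1 + (1 - l) *: y2), (l * s1 + (1 - l) * s2); split; first exact: cK.
  by apply: funext => i; rewrite /wcoords; case: ifP => // _; rewrite bfDl !bfZl.
- move=> _ [y [s [Ky ->]]]; apply: contrapT => near.
  have {}near i : (i < n.+1)%N -> `|wcoords cs y s i - wcoords cs x t i| < eps.
    by move=> im; rewrite ltNge; apply/negP => ?; apply: near; exists i.
  have : wball bf x cs eps y.
    move=> c cin; have im : (index c cs < n)%N by rewrite index_mem.
    by have := near _ (leqW im); rewrite /wcoords im (nth_index 0 cin) -bfBl.
  by move=> /(far y s Ky); have := near n (ltnSn n); rewrite /wcoords ltnn; lra.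
exists (\sum_(i < n) l i *: nth 0 cs i), (l n), (eps / 2 * \sum_(i < n.+1) `|l i|).
split; first by rewrite mulr_gt0 // divr_gt0.
move=> y s Ky; have /Hl : KI (wcoords cs y s) by exists y, s.
by rewrite !dotn_wcoords; lra.
Qed.

Lemma wclosure_separation (K : set B) x : K !=set0 -> convex_set K ->
  ~ wclosure bf K x ->
  exists d (delta : R), 0 < delta /\ forall y, K y -> bf y d + delta <= bf x d.
Proof.
move=> [y0 Ky0] cK /existsNP[cs /existsNP[eps /not_implyP[e0 nK]]].
have [||| d [mu [delta [dpos Hd]]]] :=
  @w_separation cs eps (fun y s => K y /\ s = 0) x 0 e0.
- by exists y0, 0.
- move=> y1 s1 y2 s2 l l0 l1 [K1 ->] [K2 ->].
  by split; [exact: cK | rewrite !mulr0 addr0].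
- by move=> y s [Ky _] wy; case: nK; exists y.
exists d, delta; split => // y Ky.
by have := Hd y 0 (conj Ky erefl); rewrite !mulr0 !addr0.
Qed.

Lemma conv_convex (A : set B) : convex_set (conv A).
Proof.
move=> y1 y2 l l0 l1 [s1 [H1 S1 ->]] [s2 [H2 S2 ->]].
have l1' : 0 <= 1 - l by lra.
exists ([seq (l * p.1, p.2) | p <- s1] ++ [seq ((1 - l) * p.1, p.2) | p <- s2]).
split.
- move=> p; rewrite mem_cat => /orP[] /mapP[q qin ->] /=.
    by have [q0 Aq] := H1 q qin; split => //; apply: mulr_ge0.
  by have [q0 Aq] := H2 q qin; split => //; apply: mulr_ge0.
- by rewrite big_cat !big_map /= -!mulr_sumr S1 S2 !mulr1 addrC subrK.
- rewrite big_cat !big_map /= !scaler_sumr; congr (_ + _);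
  by apply: eq_bigr => p _; rewrite scalerA.
Qed.

Lemma sub_conv (A : set B) : A `<=` conv A.
Proof.
move=> a Aa; exists [:: (1, a)]; split.
- by move=> p; rewrite inE => /eqP -> /=; split.
- by rewrite big_seq1.
- by rewrite big_seq1 scale1r.
Qed.

Section Conjugate.
Local Open Scope ereal_scope.
Implicit Types (f g : B -> \bar R) (A : set B).

Definition affine_minorant f d (be : R) := forall y, (bf y d - be)%:E <= f y.

Lemma proper_fun_fin f : proper_fun f -> exists x (r : R), f x = r%:E.
Proof.
move=> [fN [x fx]]; exists x.
by move: fx (fN x); case: (f x) => [r| |] //; exists r.
Qed.

Lemma convex_rel_epigraph f : convex_fun f -> convex_rel (fun y s => f y <= s%:E).
Proof.
move=> fc y1 s1 y2 s2 l l0 l1 K1 K2.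
have [->|ln0] := eqVneq l 0%R.
  by rewrite scale0r add0r subr0 scale1r mul0r add0r mul1r.
have [->|ln1] := eqVneq l 1%R.
  by rewrite scale1r subrr scale0r addr0 mul1r mul0r addr0.
have lp : (0 < l)%R by rewrite lt_neqAle eq_sym ln0.
have lq : (l < 1)%R by rewrite lt_neqAle ln1.
apply: le_trans (fc y1 y2 l lp lq) _.
rewrite (EFinD (l * s1)) (EFinM l s1) (EFinM (1 - l) s2).
by apply: leeD; apply: lee_wpmul2l => //; rewrite lee_fin; lra.
Qed.

Lemma wlsc_nbhs_above f x (t : R) : wlsc bf f -> t%:E < f x ->
  exists cs (eps : R), (0 < eps)%R /\
    forall y (s : R), wball bf x cs eps y -> (`|s - t| < eps)%R -> s%:E < f y.
Proof.
move=> fl tx.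
have [t1 tt1 t1x] : exists2 t1 : R, (t < t1)%R & t1%:E < f x.
  case: (f x) tx => [r| |] // tx.
    by exists ((t + r) / 2)%R; move: tx; rewrite !lte_fin; lra.
  by exists (t + 1)%R; [lra | exact: ltry].
have [cs [eps e0 Hw]] := fl x t1 t1x.
exists cs, (Num.min eps (t1 - t))%R; split; first by rewrite lt_min e0 subr_gt0.
move=> y s wy; rewrite lt_min => /andP[_ st].
have wy' : wball bf x cs eps y by move=> c /wy; rewrite lt_min => /andP[].
by apply: (lt_trans _ (Hw y wy')); rewrite lte_fin; have := ler_norm (s - t); lra.
Qed.

Lemma epigraph_separation f x (t : R) :
  wlsc bf f -> proper_fun f -> convex_fun f -> t%:E < f x ->
  exists d (mu delta : R), [/\ (0 < delta)%R, (mu <= 0)%R &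
    forall y (s : R), f y <= s%:E -> (bf y d + mu * s + delta <= bf x d + mu * t)%R].
Proof.
move=> fl fp fc tx; have [x0 [r0 fx0]] := proper_fun_fin fp.
have [cs [eps [e0 above]]] := wlsc_nbhs_above fl tx.
have [||| d [mu [delta [dpos Hd]]]] :=
  @w_separation cs eps (fun y s => f y <= s%:E) x t e0.
- by exists x0, r0; rewrite fx0.
- exact: convex_rel_epigraph.
- move=> y s fys wy; rewrite leNgt; apply/negP => /(above y s wy).
  by rewrite ltNge fys.
exists d, mu, delta; split => //.
(* with mu > 0 the points (x0, s) of the epigraph, s large, would violate the bound *)
rewrite leNgt; apply/negP => mu0.
have [k k0 Ck] := exists_pmulr_gt (bf x d + mu * t - bf x0 d - mu * r0 - delta)%R mu0.
by have := Hd x0 (r0 + k)%R; rewrite fx0 lee_fin lerDl => /(_ k0); nra.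
Qed.

Lemma affine_minorant_neg_slope f d x (t mu delta : R) :
  (forall y, f y != -oo) -> (mu < 0)%R -> (0 < delta)%R ->
  (forall y (s : R), f y <= s%:E -> (bf y d + mu * s + delta <= bf x d + mu * t)%R) ->
  exists d' (be : R), affine_minorant f d' be /\ (t < bf x d' - be)%R.
Proof.
move=> fN mu0 d0 Hd; set iv := (- mu)^-1%R.
have iv0 : (0 < iv)%R by rewrite invr_gt0 oppr_gt0.
have ivmu : (iv * mu = -1)%R.
  by rewrite /iv -{2}(opprK mu) mulrN mulVf // oppr_eq0 lt_eqF.
exists (iv *: d), (iv * bf x d - t - iv * delta)%R; split; last first.
  by rewrite bfZr; have := mulr_gt0 iv0 d0; lra.
move=> y; rewrite bfZr; case Efy: (f y) => [s| |]; last by have := fN y; rewrite Efy.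
  have := Hd y s; rewrite Efy lexx => /(_ isT) /(ler_wpM2l (ltW iv0)).
  by rewrite !mulrDr !mulrA ivmu lee_fin; lra.
exact: leey.
Qed.

Lemma proper_affine_minorant f : wlsc bf f -> proper_fun f -> convex_fun f ->
  exists d (be : R), affine_minorant f d be.
Proof.
move=> fl fp fc; have [x0 [r0 fx0]] := proper_fun_fin fp.
have [|d [mu [delta [dpos _ Hd]]]] :=
  epigraph_separation (x := x0) (t := (r0 - 1)%R) fl fp fc.
  by rewrite fx0 lte_fin; lra.
have mu0 : (mu < 0)%R by have := Hd x0 r0; rewrite fx0 lexx => /(_ isT); nra.
have [d' [be [m _]]] := affine_minorant_neg_slope fp.1 mu0 dpos Hd.
by exists d', be.
Qed.

Lemma wlsc_affine_minorant f x (t : R) :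
  wlsc bf f -> proper_fun f -> convex_fun f -> t%:E < f x ->
  exists d (be : R), affine_minorant f d be /\ (t < bf x d - be)%R.
Proof.
move=> fl fp fc tx.
have [d [mu [delta [dpos mu_le0 Hd]]]] := epigraph_separation fl fp fc tx.
have [mu_lt0|mu_ge0] := ltP mu 0%R.
  exact: affine_minorant_neg_slope fp.1 mu_lt0 dpos Hd.
have mu0 : mu = 0%R by apply/eqP; rewrite eq_le mu_le0 mu_ge0.
(* a vertical separating hyperplane: tilt some affine minorant by a large multiple of d *)
have [d0 [be0 m0]] := proper_affine_minorant fl fp fc.
have [k k0 kd] := exists_pmulr_gt (t - bf x d0 + be0)%R dpos.
exists (d0 + k *: d)%R, (be0 + k * bf x d - k * delta)%R; split; last first.
  by rewrite bfDr bfZr; lra.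
move=> y; rewrite bfDr bfZr.
case Efy: (f y) => [s| |]; last by have := fp.1 y; rewrite Efy.
  have := Hd y s; rewrite Efy lexx mu0 => /(_ isT) sep.
  have := m0 y; rewrite Efy lee_fin => m0y.
  have : (k * (bf y d - bf x d + delta) <= 0)%R by apply: mulr_ge0_le0 => //; lra.
  by rewrite lee_fin; lra.
exact: leey.
Qed.

Lemma PhiA_le A x (M : R) :
  (forall a, A a -> (bf x a - qf bf a <= M)%R) -> PhiA bf A x <= M%:E.
Proof. by move=> HM; apply: ge_ereal_sup => _ [a Aa <-]; rewrite lee_fin HM. Qed.

Lemma le_PhiA A x a : A a -> (bf x a - qf bf a)%:E <= PhiA bf A x.
Proof. by move=> Aa; apply: ereal_sup_ubound; exists a. Qed.

Lemma le_fat g b c : (bf c b)%:E - g c <= fat bf g b.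
Proof. by apply: ereal_sup_ubound; exists c. Qed.

Lemma PhiA_qpos A a : q_positive bf A -> A a -> PhiA bf A a = (qf bf a)%:E.
Proof.
move=> [_ qp] Aa; apply/eqP; rewrite eq_le; apply/andP; split.
  by apply: PhiA_le => c Ac; have := qp a c Aa Ac; rewrite qfB; lra.
have -> : qf bf a = (bf a a - qf bf a)%R by rewrite /qf; field.
exact: le_PhiA.
Qed.

Lemma fat_PhiA_qpos A a : q_positive bf A -> A a ->
  fat bf (PhiA bf A) a = (qf bf a)%:E.
Proof.
move=> qA Aa; apply/eqP; rewrite eq_le; apply/andP; split.
  apply: ge_ereal_sup => _ [c _ <-].
  have := le_PhiA c Aa; case: (PhiA bf A c) => [r| |] //.
    by rewrite !lee_fin => h; lra.
  by rewrite /= leNye.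
have := le_fat (PhiA bf A) a a; rewrite PhiA_qpos // -EFinB.
by have -> : (bf a a - qf bf a)%R = qf bf a by rewrite /qf; field.
Qed.

Lemma subset_Gf_PhiA A : q_positive bf A -> A `<=` Gf bf (PhiA bf A).
Proof.
move=> qA a Aa; rewrite /Gf /= PhiA_qpos // fat_PhiA_qpos // -EFinD /qf.
by congr (_%:E); field.
Qed.

Lemma Gf_fat_neqy g b : Gf bf g b -> fat bf g b != +oo.
Proof. by rewrite /Gf /=; case: (fat bf g b) => //; case: (g b). Qed.

Lemma fat_PhiA_neqNy A b : q_positive bf A -> fat bf (PhiA bf A) b != -oo.
Proof.
move=> qA; have [a0 Aa0] := qA.1.
by have := le_fat (PhiA bf A) b a0; rewrite PhiA_qpos // -EFinB; case: (fat _ _ _).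
Qed.

Lemma le_fat_PhiA A f b : q_positive bf A ->
  wlsc bf f -> proper_fun f -> convex_fun f ->
  (forall a, A a -> f a <= (qf bf a)%:E) -> f b <= fat bf (PhiA bf A) b.
Proof.
move=> qA fl fp fc fA; have := fat_PhiA_neqNy b qA.
case E: (fat bf (PhiA bf A) b) => [phi| |] // _; last exact: leey.
rewrite leNgt; apply/negP => /(wlsc_affine_minorant fl fp fc) [d [be [m phi_lt]]].
have Pd : PhiA bf A d <= be%:E.
  by apply: PhiA_le => a Aa; have := le_trans (m a) (fA a Aa); rewrite lee_fin bfC; lra.
have := le_trans (leeB (lexx (bf d b)%:E) Pd) (le_fat _ b d).
by rewrite E -EFinB lee_fin bfC; lra.
Qed.

Lemma fat_PhiA_notin_convw A b : q_positive bf A -> ~ convw bf A b ->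
  fat bf (PhiA bf A) b = +oo.
Proof.
move=> [[a0 Aa0] qp] nb.
have [d [delta [dpos sep]]] :=
  wclosure_separation (ex_intro _ a0 (sub_conv Aa0)) (@conv_convex A) nb.
apply: eq_infty => M.
have [r r0 Mr] := exists_pmulr_gt (M - bf a0 b + qf bf a0)%R dpos.
(* along a0 + r d, Phi_A grows at most like q(a0) + r (<b, d> - delta) *)
have Pd : PhiA bf A (a0 + r *: d)%R <= (qf bf a0 + r * (bf b d - delta))%:E.
  apply: PhiA_le => a Aa; rewrite bfDl bfZl (bfC d).
  have := qp a a0 Aa Aa0; rewrite qfB (bfC a).
  by have := ler_wpM2l r0 (sep a (sub_conv Aa)); lra.
apply: (le_trans _ (le_fat _ b (a0 + r *: d)%R)).
apply: (le_trans _ (leeB (lexx _) Pd)).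
by rewrite -EFinB lee_fin bfDl bfZl (bfC d); lra.
Qed.

End Conjugate.
End SSD.

Theorem mainTheorem12 (R : realType) (B : lmodType R) (bf : B -> B -> R)
  (A : set B) :
  SSD_space bf ->
  q_representable bf A ->
  (forall b, convw bf A b -> ((qf bf b)%:E <= PhiA bf A b)%E) ->
  A = Gf bf (PhiA bf A).
Proof.
move=> [_ [bfC bfL]] [qA [f [fl fp fc q_le_f PqA]]] convw_PhiA.
apply/seteqP; split; first exact: (subset_Gf_PhiA bfC bfL qA).
move=> b Gb; rewrite -PqA /Pq /=.
have f_le_q a : A a -> (f a <= (qf bf a)%:E)%E by rewrite -PqA => ->.
have bw : convw bf A b.
  apply: contrapT => /(fat_PhiA_notin_convw bfC bfL qA) fatE.
  by have := Gf_fat_neqy Gb; rewrite fatE.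
have fat_le_q : (fat bf (PhiA bf A) b <= (qf bf b)%:E)%E.
  apply: le_of_adde_eq (convw_PhiA b bw).
  by rewrite Gb /qf; congr (_%:E); field.
apply/eqP; rewrite eq_le q_le_f andbT.
exact: le_trans (le_fat_PhiA bfC bfL b qA fl fp fc f_le_q) fat_le_q.
Qed.
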